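(* If $\mathbf X=(X,\mu,T)$ is a nontrivial weak mixing measure preserving system, $S$ is a set of rigidity for $\mathbf X$, and $m\in\mathbb Z\setminus\{0\}$, then $S+m$ is not a set of strong recurrence for $\mathbf X$.
   Context: A measure preserving system is a probability space $(X,\mu)$ with an invertible measure preserving map $T$. $S\subseteq\mathbb Z$ is a set of rigidity for $\mathbf X$ if $S$ is infinite and for all measurable $D\subseteq X$ and $\varepsilon>0$, $\{n\in S:\mu(D\triangle T^nD)>\varepsilon\}$ is finite. $S'\subseteq\mathbb Z$ is a set of strong recurrence for $\mathbf X$ if for every measurable $D$ with $\mu(D)>0$ there is $c>0$ such that $\{n\in S':\mu(D\cap T^nD)>c\}$ is infinite. *)

From HB Require Import structures.
From mathcomp Require Import all_boot all_order all_algebra.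
From mathcomp Require Import all_classical all_reals all_analysis.
Set Implicit Arguments. Unset Strict Implicit. Unset Printing Implicit Defensive.
Import Order.TTheory GRing.Theory Num.Theory.
Local Open Scope classical_set_scope.
Local Open Scope ring_scope.

Section MPS.
Context (d : measure_display) (X : measurableType d) (R : realType).

Definition mps (mu : probability X R) (T Tinv : X -> X) : Prop :=
  [/\ cancel T Tinv, cancel Tinv T,
      measurable_fun setT T, measurable_fun setT Tinv &
      forall A, measurable A -> mu (T @^-1` A) = mu A].

Definition Tpow (T Tinv : X -> X) (n : int) : X -> X :=
  match n with
  | Posz k => iter k T
  | Negz k => iter k.+1 Tinv
  end.

Definition Timg (T Tinv : X -> X) (n : int) (D : set X) : set X :=
  Tpow T Tinv n @` D.

Definition weak_mixing (mu : probability X R) (T : X -> X) : Prop :=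
  forall A B, measurable A -> measurable B ->
    (fun N : nat => (N%:R^-1 *
       \sum_(n < N) `| fine (mu (A `&` (iter n T @^-1` B)))
                      - fine (mu A) * fine (mu B) |) : R) @ \oo --> 0.

Definition nontrivial (mu : probability X R) : Prop :=
  exists D, measurable D /\ (0 < mu D)%E /\ (mu D < 1)%E.

Definition rigidity_set (mu : probability X R) (T Tinv : X -> X)
    (S : set int) : Prop :=
  ~ finite_set S /\
  forall D (eps : R), measurable D -> 0 < eps ->
    finite_set [set n | S n /\ (eps%:E < mu (D `+` Timg T Tinv n D))%E].

Definition strong_recurrence_set (mu : probability X R) (T Tinv : X -> X)
    (S' : set int) : Prop :=
  forall D, measurable D -> (0 < mu D)%E ->
    exists2 c : R, 0 < c &
      ~ finite_set [set n | S' n /\ (c%:E < mu (D `&` Timg T Tinv n D))%E].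

End MPS.

(* Weak mixing forbids a set A with 0 < mu A < 1 from being invariant under
   T^M modulo null sets (M > 0): otherwise mu (A `&` T^(-kM) A) = mu A for all k,
   and the Cesaro means of |mu (A `&` T^(-n) A) - mu A ^ 2| stay above
   (mu A - mu A ^ 2) / M.  Hence D := A `\` T^(-M) A, with M = |m|, has
   positive measure, and D is disjoint from T^(-M) D, hence from T^m D.  Then
   D `&` T^(n+m) D lies in D `+` T^n D, which is small for all but finitely
   many n in the rigidity set S; so only finitely many k in S + m have
   mu (D `&` T^k D) > c. *)

From HB Require Import structures.
From mathcomp Require Import all_boot all_order all_algebra.
From mathcomp Require Import all_classical all_reals all_analysis.
Set Implicit Arguments. Unset Strict Implicit. Unset Printing Implicit Defensive.
Import Order.TTheory GRing.Theory Num.Theory.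
Local Open Scope classical_set_scope.
Local Open Scope ring_scope.

Section IntegerPowers.
Context (d : measure_display) (X : measurableType d).
Variables (T Tinv : X -> X).
Hypotheses (TK : cancel T Tinv) (TinvK : cancel Tinv T).

Local Notation Tpow := (Tpow T Tinv).
Local Notation Timg := (Timg T Tinv).

Lemma TpowS (n : int) x : Tpow (n + 1) x = T (Tpow n x).
Proof.
case: n => [k|[|k]]; first by rewrite /= addn1.
  by rewrite /= TinvK.
rewrite (_ : Negz k.+1 + 1 = Negz k) /= ?TinvK //.
by rewrite !NegzE [in LHS]intS opprD addrAC addNr add0r.
Qed.

Lemma TpowN1 (n : int) x : Tpow (n - 1) x = Tinv (Tpow n x).
Proof. by rewrite -{2}(subrK 1 n) TpowS TK. Qed.

Lemma TpowD (n k : int) x : Tpow (n + k) x = Tpow n (Tpow k x).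
Proof.
elim/int_ind: n => [|n IHn|n IHn]; first by rewrite add0r.
  by rewrite -addn1 PoszD addrAC !TpowS IHn.
by rewrite -addn1 PoszD opprD addrAC !TpowN1 IHn.
Qed.

Lemma TpowK (n : int) : cancel (Tpow n) (Tpow (- n)).
Proof. by move=> x; rewrite -TpowD addNr. Qed.

Lemma TpowNK (n : int) : cancel (Tpow (- n)) (Tpow n).
Proof. by move=> x; rewrite -TpowD addrN. Qed.

Lemma Timg_preimage (n : int) (D : set X) : Timg n D = Tpow (- n) @^-1` D.
Proof.
apply/seteqP; split => [_ [y Dy <-]|x Dx] /=; first by rewrite TpowK.
by exists (Tpow (- n) x); rewrite ?TpowNK.
Qed.

Lemma Timg_disjointN (n : int) (D : set X) :
  D `&` Timg n D = set0 -> D `&` Timg (- n) D = set0.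
Proof.
rewrite !Timg_preimage opprK => DnD; apply/seteqP; split => // x [Dx Dnx].
suff : (D `&` Tpow (- n) @^-1` D) (Tpow n x) by rewrite DnD.
by split; rewrite //= TpowK.
Qed.

Lemma setI_TimgD_subset (n k : int) (D : set X) : D `&` Timg k D = set0 ->
  D `&` Timg (n + k) D `<=` D `+` Timg n D.
Proof.
rewrite !Timg_preimage => DkD x [Dx Dnkx]; left; split => // Dnx.
suff : (D `&` Tpow (- k) @^-1` D) (Tpow (- n) x) by rewrite DkD.
by split; rewrite //= -TpowD -opprD addrC.
Qed.

End IntegerPowers.

Section Iterates.
Context (d : measure_display) (X : measurableType d) (R : realType).
Variables (mu : {measure set X -> \bar R}) (f : X -> X).
Hypothesis mf : measurable_fun setT f.

Lemma measurable_fun_iter k : measurable_fun setT (iter k f).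
Proof. by elim: k => [|k IHk] /=; [exact: measurable_id | exact: measurableT_comp]. Qed.

Lemma measurable_preimage_iter k A : measurable A -> measurable (iter k f @^-1` A).
Proof. by move=> mA; rewrite -[_ @^-1` _]setTI; exact: measurable_fun_iter. Qed.

Hypothesis f_preserving : forall A, measurable A -> mu (f @^-1` A) = mu A.

Lemma measure_preimage_iter k A : measurable A -> mu (iter k f @^-1` A) = mu A.
Proof.
elim: k A => [//|k IHk] A mA.
change (mu (iter k f @^-1` (f @^-1` A)) = mu A).
by rewrite IHk ?f_preserving //; exact: (measurable_preimage_iter 1).
Qed.

Lemma measure_setD_preimage_iter0 k A : measurable A ->
  mu (A `\` f @^-1` A) = 0%E -> mu (A `\` iter k f @^-1` A) = 0%E.
Proof.
move=> mA A0; have mAk j := measurable_preimage_iter j mA.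
have mAD : measurable (A `\` f @^-1` A) by exact: measurableD (mAk 1%N).
elim: k => [|k IHk]; first by rewrite setDv measure0.
have mU : measurable ((A `\` iter k f @^-1` A) `|` iter k f @^-1` (A `\` f @^-1` A)).
  exact: measurableU (measurableD mA (mAk k)) (measurable_preimage_iter k mAD).
apply: (subset_measure0 _ mU); first exact: measurableD (mAk k.+1).
- move=> x [Ax nAx].
  by have [Akx|nAkx] := pselect (A (iter k f x)); [right | left].
- apply/eqP; rewrite -measure_le0 (le_trans (measureU2 mu _ _)) //.
  + exact: measurableD (mAk k).
  + exact: measurable_preimage_iter.
  (* [measureU2] sees [mu] as a content on a ring of sets; restore its measure instance. *)
  change (mu (A `\` iter k f @^-1` A)
          + mu (iter k f @^-1` (A `\` f @^-1` A)) <= 0%R)%E.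
  by rewrite IHk measure_preimage_iter // A0 adde0.
Qed.

Lemma measure_setI_preimage_iter k A : measurable A ->
  mu (A `\` f @^-1` A) = 0%E -> mu (A `&` iter k f @^-1` A) = mu A.
Proof.
move=> mA A0; have mAk := measurable_preimage_iter k mA.
have muA : mu A = (mu (A `\` iter k f @^-1` A) + mu (A `&` iter k f @^-1` A))%E
  := measureDI mu mA mAk.
by rewrite [RHS]muA measure_setD_preimage_iter0 ?add0e.
Qed.

End Iterates.

Lemma ler_sum_multiples (R : numDomainType) (u : nat -> R) (M K : nat) (c : R) :
  (0 < M)%N -> (forall n, 0 <= u n) -> (forall k, c <= u (k * M)%N) ->
  K%:R * c <= \sum_(n < K * M) u n.
Proof.
move=> M_gt0 u_ge0 cu; elim: K => [|K IHK]; first by rewrite mul0r big_ord0.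
rewrite -(big_mkord xpredT) mulSn addnC (big_cat_nat _ (leq_addr _ _)) //=.
rewrite -natr1 mulrDl mul1r big_mkord lerD // big_ltn; last by rewrite -addn1 leq_add2l.
by rewrite -[leLHS]addr0 lerD // sumr_ge0.
Qed.

Lemma cesaro_mean_not_cvg0 (R : realType) (u : nat -> R) (M : nat) (c : R) :
  (0 < M)%N -> 0 < c -> (forall n, 0 <= u n) -> (forall k, c <= u (k * M)%N) ->
  ~ (fun N : nat => (N%:R^-1 * \sum_(n < N) u n : R)) @ \oo --> 0.
Proof.
move=> M_gt0 c_gt0 u_ge0 cu /cvgr0_norm_lt /(_ (c / M%:R)).
rewrite divr_gt0 ?ltr0n // => /(_ isT) [N _ /(_ (N.+1 * M)%N)].
move=> /(_ (leq_trans (leqnSn N) (leq_pmulr _ M_gt0))); apply/negP; rewrite -leNgt.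
rewrite ger0_norm ?mulr_ge0 ?sumr_ge0 // natrM invfM -mulrA.
rewrite ler_pdivlMl ?ltr0n // mulrA [leRHS]mulrC ler_pM2r ?invr_gt0 ?ltr0n //.
exact: ler_sum_multiples.
Qed.

Section WeakMixing.
Context (d : measure_display) (X : measurableType d) (R : realType).
Variables (mu : probability X R) (T Tinv : X -> X).
Hypothesis HT : mps mu T Tinv.

Lemma measurable_fun_Tpow (n : int) : measurable_fun setT (Tpow T Tinv n).
Proof. by case: HT => _ _ mT mTinv _; case: n => k; exact: measurable_fun_iter. Qed.

Lemma measurable_Timg (n : int) (A : set X) : measurable A ->
  measurable (Timg T Tinv n A).
Proof.
case: HT => TK TinvK _ _ _ mA; rewrite Timg_preimage // -[_ @^-1` _]setTI.
exact: measurable_fun_Tpow.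
Qed.

Hypotheses (mu_nontrivial : nontrivial mu) (T_weak_mixing : weak_mixing mu T).

Lemma weak_mixing_disjoint_preimage (M : nat) : (0 < M)%N ->
  exists D, [/\ measurable D, (0 < mu D)%E & D `&` iter M T @^-1` D = set0].
Proof.
move=> M_gt0; case: HT => _ _ mT _ T_preserving.
have [A [mA [A_gt0 A_lt1]]] := mu_nontrivial.
have mTMA := measurable_preimage_iter mT M mA.
have [AD_gt0|AD_le0] := ltP 0%E (mu (A `\` iter M T @^-1` A)).
  exists (A `\` iter M T @^-1` A); split => //; first exact: measurableD.
  by apply/seteqP; split => x // [[_ nATx] [ATx _]].
have AD0 : mu (A `\` iter M T @^-1` A) = 0%E by apply/eqP; rewrite -measure_le0.
exfalso; set p := fine (mu A).
have p_gt0 : 0 < p by rewrite fine_gt0 // A_gt0 (lt_le_trans A_lt1) ?leey.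
have p_lt1 : p < 1.
  by rewrite -lte_fin fineK // ge0_fin_numE // (lt_le_trans A_lt1) ?leey.
pose u n := `|fine (mu (A `&` iter n T @^-1` A)) - p * p|.
apply: (@cesaro_mean_not_cvg0 _ u M (p - p * p)) (T_weak_mixing mA mA) => //.
- by rewrite subr_gt0 gtr_pMr.
- by move=> n; exact: normr_ge0.
move=> k; rewrite /u (funext (iterM k M T)).
have mTM := measurable_fun_iter mT M.
rewrite measure_setI_preimage_iter //; last exact: measure_preimage_iter.
by rewrite ger0_norm // subr_ge0 ler_piMr ?ltW.
Qed.

Lemma weak_mixing_disjoint_Timg (m : int) : m != 0 ->
  exists D, [/\ measurable D, (0 < mu D)%E & D `&` Timg T Tinv m D = set0].
Proof.
case: HT => TK TinvK _ _ _ m_neq0.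
have [|D [mD D_gt0 DD]] := weak_mixing_disjoint_preimage (M := `|m|%N).
  by rewrite absz_gt0.
exists D; split => //.
have DmD : D `&` Timg T Tinv (- `|m|%:Z) D = set0 by rewrite Timg_preimage ?opprK.
have [m_ge0|m_lt0] := leP 0 m.
  by rewrite -(gez0_abs m_ge0) -[Posz _]opprK; exact: Timg_disjointN.
by rewrite ltz0_abs ?opprK in DmD.
Qed.

End WeakMixing.

Theorem lemma4p1 (d : measure_display) (X : measurableType d) (R : realType)
  (mu : probability X R) (T Tinv : X -> X) (S : set int) (m : int) :
  mps mu T Tinv -> nontrivial mu -> weak_mixing mu T ->
  rigidity_set mu T Tinv S -> m != 0 ->
  ~ strong_recurrence_set mu T Tinv [set n + m | n in S].
Proof.
move=> HT NT WM [_ S_rigid] m_neq0 S_recurrent.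
have [D [mD D_gt0 DmD]] := weak_mixing_disjoint_Timg HT NT WM m_neq0.
have [c c_gt0] := S_recurrent D mD D_gt0; apply.
apply: sub_finite_set (finite_image (+%R^~ m) (S_rigid D c mD c_gt0)).
move=> _ [[n Sn <-] c_lt]; exists n => //; split => //.
have [TK TinvK _ _ _] := HT; have mTimg k := measurable_Timg HT k mD.
apply/(lt_le_trans c_lt)/le_measure; rewrite ?inE.
- exact: measurableI.
- exact: measurableU (measurableD _ _) (measurableD _ _).
- exact: setI_TimgD_subset.
Qed.
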